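(* Let $A$ be a Ritt algebra, i.e. a differential ring containing $\mathbb Q$, let $X=\operatorname{Spec}^\Delta A$, $\widehat A=\mathcal O(X)$, and let $\iota\colon A\to\widehat A$ be the canonical homomorphism. Then $\iota^*\colon\operatorname{Spec}^\Delta\widehat A\to\operatorname{Spec}^\Delta A$, $\mathfrak q\mapsto\iota^{-1}(\mathfrak q)$, is a homeomorphism.
   Context: All rings are commutative with unit. A differential ring is a ring with finitely many pairwise commuting derivations. $\operatorname{Spec}^\Delta R$ is the set of prime ideals of a differential ring $R$ closed under all derivations, with the Kolchin topology (closed sets $V(E)=\{\mathfrak p: E\subseteq\mathfrak p\}$). For $\mathfrak p\in X$, $A_{\mathfrak p}$ is the localization at $A\setminus\mathfrak p$. Structure sheaf: for open $U\subseteq X$, $\mathcal O(U)$ is the set of functions $f$ on $U$ with $f(\mathfrak p)\in A_{\mathfrak p}$ that are regular at every point of $U$, where $f$ is regular at $\mathfrak p$ if there exist an open neighborhood $W\subseteq U$ of $\mathfrak p$ and $a,b\in A$ with $b\notin\mathfrak q$ and $f(\mathfrak q)=a/b$ in $A_{\mathfrak q}$ for all $\mathfrak q\in W$; it is a differential ring with pointwise operations and derivations. The canonical differential homomorphism $\iota\colon A\to\mathcal O(X)$ sends $a$ to the function $\mathfrak p\mapsto a/1\in A_{\mathfrak p}$. *)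

From HB Require Import structures.
From mathcomp Require Import all_boot all_algebra.
Set Implicit Arguments. Unset Strict Implicit. Unset Printing Implicit Defensive.
Import GRing.Theory.
Local Open Scope ring_scope.

(** A carrier type [dcar], a membership predicate [dmem] singling out the
    elements of the ring inside the carrier (for [A] itself this is [True];
    for [O(X)] it is "regular section"), and the ring operations and the
    [m] derivations.  No axioms are imposed: the record is only instantiated
    with genuine differential rings (A itself and O(X) with its pointwise
    operations), and serves to define Spec^Delta uniformly. *)
Record dring (m : nat) := DRing {
  dcar : Type;
  dmem : dcar -> Prop;
  dzero : dcar;
  done : dcar;
  dadd : dcar -> dcar -> dcar;
  dopp : dcar -> dcar;
  dmul : dcar -> dcar -> dcar;
  dder : 'I_m -> dcar -> dcar }.

Definition is_dprime m (D : dring m) (P : dcar D -> Prop) : Prop :=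
  (forall x, P x -> dmem x) /\
  P (dzero D) /\
  (forall x y, P x -> P y -> P (dadd x y)) /\
  (forall x, P x -> P (dopp x)) /\
  (forall r x, dmem r -> P x -> P (dmul r x)) /\
  ~ P (done D) /\
  (forall x y, dmem x -> dmem y -> P (dmul x y) -> P x \/ P y) /\
  (forall i x, P x -> P (dder i x)).

Definition dspec m (D : dring m) := {P : dcar D -> Prop | @is_dprime m D P}.

Definition kclosed m (D : dring m) (C : dspec D -> Prop) : Prop :=
  exists E : dcar D -> Prop, forall P : dspec D, C P <-> (forall x, E x -> sval P x).
Definition kopen m (D : dring m) (U : dspec D -> Prop) : Prop :=
  kclosed (fun P => ~ U P).

Definition kcontinuous m1 m2 (D1 : dring m1) (D2 : dring m2)
  (f : dspec D1 -> dspec D2) : Prop :=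
  forall U, kopen U -> kopen (fun x => U (f x)).

Definition khomeomorphism m1 m2 (D1 : dring m1) (D2 : dring m2)
  (f : dspec D1 -> dspec D2) : Prop :=
  exists g : dspec D2 -> dspec D1,
    [/\ (forall x, g (f x) = x), (forall y, f (g y) = y),
        kcontinuous f & kcontinuous g].

Definition is_derivation (R : comNzRingType) (D : R -> R) : Prop :=
  (forall x y, D (x + y) = D x + D y) /\ (forall x y, D (x * y) = D x * y + x * D y).

Definition is_diff_ring (R : comNzRingType) m (d : 'I_m -> R -> R) : Prop :=
  (forall i, is_derivation (d i)) /\ (forall i j x, d i (d j x) = d j (d i x)).

(** Ritt algebra: contains Q, i.e. every positive integer is invertible. *)
Definition ritt (R : comNzRingType) : Prop := forall n : nat, exists y : R, (n.+1)%:R * y = 1.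

Definition ring_dring (R : comNzRingType) m (d : 'I_m -> R -> R) : dring m :=
  @DRing m R (fun _ => True) 0 1 +%R -%R *%R d.

Section StructureSheaf.
Variables (R : comNzRingType) (m : nat) (d : 'I_m -> R -> R).

Definition Xsp := dspec (ring_dring d).

(** The element a/s of the localization A_p, as an equivalence class of pairs. *)
Definition lclass (p : R -> Prop) (a s : R) : R * R -> Prop :=
  fun bt => ~ p bt.2 /\ exists u, ~ p u /\ u * (a * bt.2 - bt.1 * s) = 0.

Definition in_stalk (p : Xsp) (c : R * R -> Prop) : Prop :=
  exists a s, ~ sval p s /\ c = lclass (sval p) a s.

Definition rsec := Xsp -> (R * R -> Prop).

Definition regular_at (U : Xsp -> Prop) (f : rsec) (p : Xsp) : Prop :=
  exists W : Xsp -> Prop, [/\ kopen W, W p, (forall q, W q -> U q) &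
    exists a b, forall q, W q -> ~ sval q b /\ f q = lclass (sval q) a b].

(** f in O(U) (values outside U are irrelevant). *)
Definition in_OU (U : Xsp -> Prop) (f : rsec) : Prop :=
  forall p, U p -> in_stalk p (f p) /\ regular_at U f p.

Definition in_OX (f : rsec) : Prop := in_OU (fun _ => True) f.

Definition lift2 (op : R -> R -> R -> R -> R * R) (p : R -> Prop)
  (c1 c2 : R * R -> Prop) : R * R -> Prop :=
  fun xy => exists a s b t, [/\ ~ p s, ~ p t, c1 = lclass p a s, c2 = lclass p b t
                & lclass p (op a s b t).1 (op a s b t).2 xy].
Definition lift1 (op : R -> R -> R * R) (p : R -> Prop)
  (c : R * R -> Prop) : R * R -> Prop :=
  fun xy => exists a s, [/\ ~ p s, c = lclass p a s
                & lclass p (op a s).1 (op a s).2 xy].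

Definition cadd := lift2 (fun a s b t => (a * t + b * s, s * t)).
Definition cmul := lift2 (fun a s b t => (a * b, s * t)).
Definition copp := lift1 (fun a s => (- a, s)).
Definition cder (i : 'I_m) := lift1 (fun a s => (d i a * s - a * d i s, s * s)).

Definition OX_dring : dring m :=
  @DRing m rsec in_OX
    (fun q => lclass (sval q) 0 1)
    (fun q => lclass (sval q) 1 1)
    (fun f g q => cadd (sval q) (f q) (g q))
    (fun f q => copp (sval q) (f q))
    (fun f g q => cmul (sval q) (f q) (g q))
    (fun i f q => cder i (sval q) (f q)).

Definition canon_iota (a : R) : rsec := fun q => lclass (sval q) a 1.

End StructureSheaf.
Arguments canon_iota {R m} d a _ _.

(** We show that [iota^* : Q ↦ iota^-1(Q)] is a homeomorphism
    whose inverse sends a point [p] to [Q_p = {f ∈ O(X) | f(p) ∈ p A_p}].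

    - Differential ideals (closure properties, generated ideals, chains) and
      Zorn's lemma give differential ideals maximal among those avoiding the
      powers of an element.  In a Ritt algebra the radical of a differential
      ideal is differential (Ritt's lemma), so such maximal ideals are prime.
      Consequences: existence of points avoiding an element, quasi-compactness
      of [Spec^Δ A], and nilpotence of [x a] when [a] vanishes locally on [D(x)].
    - Computation with fractions [a/s] in the localisations [A_p].
    - Regular sections are locally fractions on basic opens [D(e)] and are
      closed under the ring operations; [iota^* Q] and [Q_p] are points.
    - Key lemma: a section vanishing on [D(e)] becomes nilpotent after
      multiplication by [iota e] (quasi-compactness), hence lies in every
      point of [Spec^Δ O(X)]; this yields [Q = Q_(iota^* Q)].  Together with
      [iota^*(Q_p) = p] and the continuity of both maps, the theorem follows. *)

From mathcomp Require Import all_boot all_algebra ring.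
From mathcomp Require Import boolp classical_sets.
Set Implicit Arguments. Unset Strict Implicit. Unset Printing Implicit Defensive.
Import GRing.Theory.
Local Open Scope classical_set_scope.
Local Open Scope ring_scope.

Lemma kclosed_hull m (D : dring m) (C : dspec D -> Prop) :
  (forall P, (forall x, (forall P', C P' -> sval P' x) -> sval P x) -> C P) -> kclosed C.
Proof.
move=> hC; exists (fun x => forall P', C P' -> sval P' x) => P.
by split=> [CP x|]; [apply | apply: hC].
Qed.

Lemma dspec_eq m (D : dring m) (P1 P2 : dspec D) : sval P1 = sval P2 -> P1 = P2.
Proof. by case: P1 P2 => [P1 h1] [P2 h2] /= e; apply: eq_exist. Qed.

Section Derivation.
Variables (R : comNzRingType) (D : R -> R).
Hypothesis hD : is_derivation D.

Lemma derD x y : D (x + y) = D x + D y. Proof. exact: hD.1. Qed.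
Lemma derM x y : D (x * y) = D x * y + x * D y. Proof. exact: hD.2. Qed.

Lemma der0 : D 0 = 0.
Proof. by apply: (@addrI _ (D 0)); rewrite addr0 -derD addr0. Qed.

Lemma der1 : D 1 = 0.
Proof.
have := derM 1 1; rewrite !(mulr1, mul1r) => h.
by apply: (@addrI _ (D 1)); rewrite addr0 -h.
Qed.

Lemma derN x : D (- x) = - D x.
Proof. by apply/eqP; rewrite -subr_eq0 opprK -derD addNr der0. Qed.

Lemma derB x y : D (x - y) = D x - D y.
Proof. by rewrite derD derN. Qed.

Lemma derXS y n : D (y ^+ n.+1) = n.+1%:R * y ^+ n * D y.
Proof.
elim: n => [|n IH]; first by rewrite expr1 expr0 mulr1 mul1r.
by rewrite exprS derM IH -(natr1 n.+1) exprS; ring.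
Qed.

(** The power rule multiplied by [y], which also holds for [n = 0]. *)
Lemma derX y n : y * D (y ^+ n) = n%:R * y ^+ n * D y.
Proof.
case: n => [|n]; first by rewrite expr0 der1 mulr0 !mul0r.
by rewrite derXS exprS; ring.
Qed.

End Derivation.

Section DifferentialIdeals.
Variables (R : comNzRingType) (m : nat) (d : 'I_m -> R -> R).

Definition is_di (J : set R) : Prop :=
  [/\ J 0, (forall x y, J x -> J y -> J (x + y)),
      (forall r x, J x -> J (r * x)) & (forall i x, J x -> J (d i x))].

Section Closure.
Variables (J : set R) (hJ : is_di J).

Lemma di0 : J 0. Proof. by case: hJ. Qed.
Lemma diD x y : J x -> J y -> J (x + y). Proof. by case: hJ => _ h _ _; apply: h. Qed.
Lemma diM r x : J x -> J (r * x). Proof. by case: hJ => _ _ h _; apply: h. Qed.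
Lemma diMr r x : J x -> J (x * r). Proof. by rewrite mulrC; apply: diM. Qed.
Lemma diDer i x : J x -> J (d i x). Proof. by case: hJ => _ _ _ h; apply: h. Qed.
Lemma diN x : J x -> J (- x). Proof. by rewrite -mulN1r; apply: diM. Qed.
Lemma diB x y : J x -> J y -> J (x - y). Proof. by move=> hx hy; apply: diD => //; apply: diN. Qed.
Lemma diXle x n k : (n <= k)%N -> J (x ^+ n) -> J (x ^+ k).
Proof. by move=> le h; rewrite -(subnK le) exprD; apply: diM. Qed.
Lemma di_sum (I : Type) (r : seq I) (P : pred I) (F : I -> R) :
  (forall i, P i -> J (F i)) -> J (\sum_(i <- r | P i) F i).
Proof. by move=> h; apply: big_ind => //; [apply: di0 | apply: diD]. Qed.

End Closure.

Definition DI (S : set R) : set R := fun z => forall J, is_di J -> S `<=` J -> J z.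

Lemma DI_di S : is_di (DI S).
Proof.
split=> [J hJ _|x y hx hy J hJ hS|r x hx J hJ hS|i x hx J hJ hS].
- exact: di0.
- by apply: diD => //; [apply: hx | apply: hy].
- by apply: diM => //; apply: hx.
- by apply: diDer => //; apply: hx.
Qed.

Lemma sub_DI S : S `<=` DI S. Proof. by move=> y Sy J _; apply. Qed.

Lemma DI_min S J : is_di J -> S `<=` J -> DI S `<=` J.
Proof. by move=> hJ hS z; apply. Qed.

Lemma DI_mono S S' : S `<=` S' -> DI S `<=` DI S'.
Proof. by move=> hS z h J hJ hS'; apply: h => // y /hS /hS'. Qed.

Definition rad (J : set R) : set R := fun x => exists n, J (x ^+ n).
Definition radical (J : set R) : Prop := rad J `<=` J.

(** Empty members
    are allowed because Zorn's lemma also ranges over the empty chain. *)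
Lemma di_chain_union (F : set (set R)) :
  total_on F subset -> (forall K, F K -> K !=set0 -> is_di K) ->
  \bigcup_(K in F) K !=set0 -> is_di (\bigcup_(K in F) K).
Proof.
move=> Ftot Fdi [z0 [K0 FK0 K0z0]].
have Kdi K x : F K -> K x -> is_di K by move=> FK Kx; apply: Fdi FK _; exists x.
have common x y : (\bigcup_(K in F) K) x -> (\bigcup_(K in F) K) y ->
    exists2 K, F K & K x /\ K y.
  move=> [K1 FK1 K1x] [K2 FK2 K2y].
  by case: (Ftot _ _ FK1 FK2) => [/(_ x K1x) K2x | /(_ y K2y) K1y]; [exists K2 | exists K1].
split=> [|x y hx hy|r x [K FK Kx]|i x [K FK Kx]].
- by exists K0 => //; apply: di0 (Kdi _ _ FK0 K0z0).
- have [K FK [Kx Ky]] := common x y hx hy.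
  by exists K => //; exact: (diD (Kdi _ _ FK Kx) Kx Ky).
- by exists K => //; exact: (diM (Kdi _ _ FK Kx) r Kx).
- by exists K => //; exact: (diDer (Kdi _ _ FK Kx) i Kx).
Qed.

Definition avoids (J : set R) (y : R) : Prop := forall n, ~ J (y ^+ n).

Lemma maximal_avoiding J y : is_di J -> avoids J y ->
  exists M, [/\ is_di M, J `<=` M, avoids M y &
    forall K, is_di K -> M `<=` K -> avoids K y -> K `<=` M].
Proof.
move=> hJ hy.
pose Fam K := [/\ is_di K, J `<=` K & avoids K y].
have [M [FamM Mmax]] : exists M, (M !=set0 -> Fam M) /\
    forall K, M `<` K -> ~ (K !=set0 -> Fam K).
  apply: Zorn_bigcup => F FP Ftot Fne; have [z [K0 FK0 K0z]] := Fne.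
  have FamK K x : F K -> K x -> Fam K by move=> FK Kx; apply: FP FK _; exists x.
  split.
  - apply: di_chain_union => // K FK [x Kx]; by case: (FamK _ _ FK Kx).
  - move=> x Jx; exists K0 => //; by case: (FamK _ _ FK0 K0z) => _ /(_ x Jx).
  - move=> n [K FK Kyn]; by case: (FamK _ _ FK Kyn) => _ _ /(_ n).
have M_ne : M !=set0.
  apply: contrapT => M0; apply: (Mmax J) => [|_]; last by split.
  split; first by move=> x Mx; case: M0; exists x.
  by move=> /(_ 0 (di0 hJ)) M00; apply: M0; exists 0.
case: (FamM M_ne) => hM JM yM; exists M; split=> // K hK MK yK.
apply: contrapT => KM; apply: (Mmax K) => [|_]; first by split.
by split=> // x /JM /MK.
Qed.

Lemma DI_finite S z : DI S z ->
  exists2 l : seq R, (forall x, x \in l -> S x) & DI (fun x => x \in l) z.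
Proof.
pose F z := exists2 l : seq R, (forall x, x \in l -> S x) & DI (fun x => x \in l) z.
apply: (@DI_min S F) => [|x Sx]; last first.
  by exists [:: x] => [y|]; [rewrite inE => /eqP -> | apply: sub_DI; rewrite inE].
split=> [|x y [l1 S1 h1] [l2 S2 h2]|r x [l Sl hl]|i x [l Sl hl]].
- by exists [::] => //; apply: di0 (DI_di _).
- exists (l1 ++ l2) => [w|]; first by rewrite mem_cat => /orP [/S1|/S2].
  by apply: (diD (DI_di _)); [apply: (DI_mono _ h1) | apply: (DI_mono _ h2)] => w /= wl;
    rewrite mem_cat wl ?orbT.
- by exists l => //; exact: (diM (DI_di _) r hl).
- by exists l => //; exact: (diDer (DI_di _) i hl).
Qed.

End DifferentialIdeals.

Section DifferentialRing.
Variables (R : comNzRingType) (m : nat) (d : 'I_m -> R -> R).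
Hypothesis hd : is_diff_ring d.

Let dM i := derM (hd.1 i).
Let dX i := derX (hd.1 i).

(** In a radical differential ideal, [a z ∈ J] implies [a (d z) ∈ J], because
    [(a d z)^2 = (a d z) d(a z) - (d a d z) (a z)]. *)
Lemma radical_mul_der J i a z : is_di d J -> radical J -> J (a * z) -> J (a * d i z).
Proof.
move=> hJ Jrad haz; apply: Jrad; exists 2%N.
have -> : (a * d i z) ^+ 2 = (a * d i z) * d i (a * z) - (d i a * d i z) * (a * z).
  by rewrite dM; ring.
by apply: (diB hJ); apply: (diM hJ) => //; apply: (diDer hJ).
Qed.

Lemma radical_DI_mul M a b : is_di d M -> radical M -> M (a * b) ->
  forall z w, DI d (M `|` [set a]) z -> DI d (M `|` [set b]) w -> M (z * w).
Proof.
move=> hM Mrad Mab.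
have hMa : DI d (M `|` [set b]) `<=` (fun w => M (a * w)).
  apply: (@DI_min _ _ d _ (fun w => M (a * w))) => [|w [Mw|->] //]; last by apply: (diM hM).
  split=> [|x y hx hy|r x hx|i x hx].
  - by rewrite mulr0; apply: (di0 hM).
  - by rewrite mulrDr; apply: (diD hM).
  - by rewrite mulrCA; apply: (diM hM).
  - exact: radical_mul_der.
move=> z w hz; move: z hz w.
apply: (@DI_min _ _ d _ (fun z => forall w, DI d (M `|` [set b]) w -> M (z * w)))
  => [|z [Mz|->]]; last 2 first.
- by move=> w _; rewrite mulrC; apply: (diM hM).
- exact: hMa.
split=> [w _|x y hx hy w hw|r x hx w hw|i x hx w hw].
- by rewrite mul0r; apply: (di0 hM).
- by rewrite mulrDl; apply: (diD hM); [apply: hx | apply: hy].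
- by rewrite -mulrA; apply: (diM hM); apply: hx.
- have -> : d i x * w = d i (x * w) - x * d i w by rewrite dM addrK.
  apply: (diB hM); first by apply: (diDer hM); apply: hx.
  by apply: hx; apply: (diDer (DI_di _ _)).
Qed.

Lemma torsion_di a : is_di d (fun z => exists k, z * a ^+ k = 0).
Proof.
split=> [|z1 z2 [k1 h1] [k2 h2]|r z [k hk]|i z [k hk]].
- by exists 0%N; rewrite mul0r.
- by exists (k1 + k2)%N; rewrite exprD mulrDl mulrA h1 mul0r mulrCA h2 mulr0 addr0.
- by exists k; rewrite -mulrA hk mulr0.
exists k.+1.
have := congr1 (d i) hk; rewrite der0 ?dM => [h0|]; last exact: hd.1.
have -> : d i z * a ^+ k.+1 = a * (d i z * a ^+ k + z * d i (a ^+ k)) - k%:R * d i a * (z * a ^+ k).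
  by rewrite mulrDr (mulrCA a z) dX exprS; ring.
by rewrite h0 hk !mulr0 subr0.
Qed.

End DifferentialRing.

Section Points.
Variables (R : comNzRingType) (m : nat) (d : 'I_m -> R -> R).
Local Notation pt := (Xsp d).

Lemma pt_di (q : pt) : is_di d (sval q).
Proof. by case: q => P /= [_ [h0 [hD [_ [hM [_ [_ hder]]]]]]]; split=> // r x; apply: hM. Qed.

Lemma pt1 (q : pt) : ~ sval q 1.
Proof. by case: q => P /= [_ [_ [_ [_ [_ [h1 _]]]]]]. Qed.

Lemma ptpr (q : pt) x y : sval q (x * y) -> sval q x \/ sval q y.
Proof. by case: q => P /= [_ [_ [_ [_ [_ [_ [hpr _]]]]]]]; apply: hpr. Qed.

Lemma nqM (q : pt) x y : ~ sval q x -> ~ sval q y -> ~ sval q (x * y).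
Proof. by move=> hx hy /ptpr []. Qed.

Lemma nqME (q : pt) x y : ~ sval q (x * y) -> ~ sval q x /\ ~ sval q y.
Proof.
by move=> h; split=> hx; apply: h; [exact: (diMr (pt_di q) y hx) | exact: (diM (pt_di q) x hx)].
Qed.

Lemma nqX (q : pt) x n : ~ sval q x -> ~ sval q (x ^+ n).
Proof.
by move=> hx; elim: n => [|n IH]; [rewrite expr0; apply: pt1 | rewrite exprS; apply: nqM].
Qed.

Definition mkpt (P : set R) (hP : is_di d P) (h1 : ~ P 1)
  (hpr : forall x y, P (x * y) -> P x \/ P y) : pt.
Proof.
exists P; do !split => //.
- exact: di0 hP.
- exact: diD hP.
- exact: diN hP.
- by move=> r x _; apply: diM hP r x.
- by move=> x y _ _; apply: hpr.
- exact: diDer hP.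
Defined.

End Points.
Arguments pt1 {R m d} q.

Section RittAlgebra.
Variables (R : comNzRingType) (m : nat) (d : 'I_m -> R -> R).
Hypotheses (hd : is_diff_ring d) (hQ : ritt R).
Local Notation pt := (Xsp d).

Let dM i := derM (hd.1 i).
Let dX i := derX (hd.1 i).
Let dXS i := derXS (hd.1 i).

(** One step of Ritt's lemma, with [y = d i x]: from [x^(j+1) y^(2k) ∈ J] we get
    [(j+1) x^j y^(2k+2) = y d(x^(j+1) y^(2k)) - 2k (d y) x^(j+1) y^(2k) ∈ J],
    and [j+1] is invertible in [R]. *)
Lemma ritt_step J i x j k : is_di d J -> J (x ^+ j.+1 * d i x ^+ (k + k)) ->
  J (x ^+ j * d i x ^+ (k.+1 + k.+1)).
Proof.
move=> hJ h; set y := d i x; set z := x ^+ j.+1 * y ^+ (k + k).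
have key : j.+1%:R * (x ^+ j * y ^+ (k.+1 + k.+1)) = y * d i z - (k + k)%:R * d i y * z.
  rewrite /z dM dXS -/y mulrDr (mulrCA y (x ^+ j.+1)) dX.
  by rewrite addSn addnS !exprS; ring.
have [w hw] := hQ j.
have -> : x ^+ j * y ^+ (k.+1 + k.+1) = w * (j.+1%:R * (x ^+ j * y ^+ (k.+1 + k.+1))).
  by rewrite mulrA (mulrC w) hw mul1r.
rewrite key; apply: (diM hJ); apply: (diB hJ); apply: (diM hJ) => //.
exact: (diDer hJ).
Qed.

Lemma ritt_lemma J i x n : is_di d J -> J (x ^+ n) -> J (d i x ^+ (n + n)).
Proof.
move=> hJ hx.
suff H k j : (j + k)%N = n -> J (x ^+ j * d i x ^+ (k + k)).
  by have := H n 0%N (add0n n); rewrite expr0 mul1r.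
elim: k j => [|k IH] j hjk; first by rewrite addn0 in hjk; rewrite expr0 mulr1 hjk.
by apply: ritt_step => //; apply: IH; rewrite addSn -addnS.
Qed.

Lemma rad_di J : is_di d J -> is_di d (rad J).
Proof.
move=> hJ; split=> [|x y [n hn] [k hk]|r x [n hn]|i x [n hn]].
- by exists 1%N; rewrite expr1; apply: di0 hJ.
- exists (n + k)%N; rewrite exprDn; apply: (di_sum hJ) => i _; rewrite -mulr_natl.
  apply: (diM hJ); case: (leqP k i) => hi; first by apply: (diM hJ); apply: (diXle hJ) hk.
  apply: (diMr hJ); apply: (diXle hJ) hn.
  by rewrite leq_subRL ?(leq_trans (ltnW hi)) ?leq_addl // addnC leq_add2l ltnW.
- by exists n; rewrite exprMn; apply: (diM hJ).
- by exists (n + n)%N; apply: ritt_lemma.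
Qed.

Section MaximalAvoiding.
Variables (M : set R) (y : R).
Hypotheses (hM : is_di d M) (yM : avoids M y)
  (Mmax : forall K, is_di d K -> M `<=` K -> avoids K y -> K `<=` M).

Lemma maximal_avoiding_radical : radical M.
Proof.
apply: Mmax; first exact: rad_di.
- by move=> x Mx; exists 1%N; rewrite expr1.
- by move=> n [k hk]; apply: (@yM (n * k)%N); rewrite exprM.
Qed.

(** If [a, b ∉ M], maximality puts powers of [y] in [[M, a]] and [[M, b]], and
    their product lies in [M] by [radical_DI_mul]. *)
Lemma maximal_avoiding_prime a b : M (a * b) -> M a \/ M b.
Proof.
move=> Mab; apply: contrapT => /not_orP [Ma Mb].
have grows c : ~ M c -> exists n, DI d (M `|` [set c]) (y ^+ n).
  move=> Mc; apply: contrapT => /forallNP yc; apply: Mc.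
  apply: (Mmax (DI_di d (M `|` [set c])) _ yc); first by move=> x Mx; apply: sub_DI; left.
  by apply: sub_DI; right.
have [n hn] := grows a Ma; have [k hk] := grows b Mb.
apply: (@yM (n + k)%N); rewrite exprD.
exact: (radical_DI_mul hd hM maximal_avoiding_radical Mab hn hk).
Qed.

End MaximalAvoiding.

Lemma exists_dprime J y : is_di d J -> avoids J y ->
  exists q : pt, J `<=` sval q /\ ~ sval q y.
Proof.
move=> hJ hy; have [M [hM JM yM Mmax]] := maximal_avoiding hJ hy.
have M1 : ~ M 1 by move=> h; apply: (yM 0%N); rewrite expr0.
exists (mkpt hM M1 (maximal_avoiding_prime hM yM Mmax)); split=> //=.
by move=> h; apply: (yM 1%N); rewrite expr1.
Qed.

Lemma quasi_compact E : (forall q : pt, exists2 x, E x & ~ sval q x) ->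
  exists2 l : seq R, (forall x, x \in l -> E x) &
    forall q : pt, exists2 x, x \in l & ~ sval q x.
Proof.
move=> hE.
have E1 : DI d E 1.
  apply: contrapT => h1.
  have [|q [Eq q1]] := @exists_dprime (DI d E) 1 (DI_di d E); first by move=> n; rewrite expr1n.
  by have [x Ex qx] := hE q; apply: qx; apply: Eq; apply: sub_DI.
have [l lE l1] := DI_finite E1; exists l => // q.
apply: contrapT => hq; apply: (pt1 q); apply: (DI_min (pt_di q) _ l1) => x lx.
by apply: contrapT => qx; apply: hq; exists x.
Qed.

(** If [a] vanishes in the localisation at every point of [D(x)], then [x a]
    is nilpotent: some [x^n] lies in the differential ideal generated by the
    annihilator of [a], which kills a power of [a] by [torsion_di]. *)
Lemma locally_zero_nilpotent a x :
  (forall q : pt, ~ sval q x -> exists2 u, ~ sval q u & u * a = 0) ->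
  exists n, (x * a) ^+ n = 0.
Proof.
move=> ha.
have [n xn] : exists n, DI d (fun z => z * a = 0) (x ^+ n).
  apply: contrapT => /forallNP hx.
  have [q [Annq qx]] := exists_dprime (DI_di d _) hx.
  by have [u qu ua] := ha q qx; apply: qu; apply: Annq; apply: sub_DI.
have [k hk] : exists k, x ^+ n * a ^+ k = 0.
  by apply: (DI_min (torsion_di hd a)) xn => z za; exists 1%N; rewrite expr1.
exists (n + k)%N; rewrite exprMn.
have -> : x ^+ (n + k) * a ^+ (n + k) = (x ^+ n * a ^+ k) * (x ^+ k * a ^+ n).
  by rewrite !exprD; ring.
by rewrite hk mul0r.
Qed.

End RittAlgebra.

Section Localisation.
Variables (R : comNzRingType) (p : set R).
Hypotheses (p1 : ~ p 1) (pM : forall x y, ~ p x -> ~ p y -> ~ p (x * y)).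

Lemma lc_refl a s : ~ p s -> lclass p a s (a, s).
Proof. by move=> hs; split=> //; exists 1; split=> //; rewrite subrr mulr0. Qed.

Lemma lc_eqI a s b t : ~ p s -> ~ p t ->
  (exists2 u, ~ p u & u * (a * t - b * s) = 0) -> lclass p a s = lclass p b t.
Proof.
move=> hs ht [u pu hu]; apply/predeqP => -[c w]; rewrite /lclass /=.
split=> -[pw [v [pv hv]]]; split=> //.
- exists (u * v * s); split; first by apply: pM => //; apply: pM.
  have -> : u * v * s * (b * w - c * t) =
    u * t * (v * (a * w - c * s)) - w * v * (u * (a * t - b * s)) by ring.
  by rewrite hu hv !mulr0 subrr.
- exists (u * v * t); split; first by apply: pM => //; apply: pM.
  have -> : u * v * t * (a * w - c * s) =
    u * s * (v * (b * w - c * t)) + w * v * (u * (a * t - b * s)) by ring.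
  by rewrite hu hv !mulr0 addr0.
Qed.

Lemma lc_eqE a s b t : ~ p t -> lclass p a s = lclass p b t ->
  exists2 u, ~ p u & u * (a * t - b * s) = 0.
Proof.
move=> ht e; have [_ [u [pu hu]]] : lclass p a s (b, t) by rewrite e; apply: lc_refl.
by exists u.
Qed.

Lemma lc_eqR a s b t : ~ p s -> ~ p t -> a * t = b * s -> lclass p a s = lclass p b t.
Proof. by move=> hs ht e; apply: lc_eqI => //; exists 1 => //; rewrite e subrr mulr0. Qed.

Lemma lift2_lc (op : R -> R -> R -> R -> R * R) a s b t : ~ p s -> ~ p t ->
  (forall a s b t a' s' b' t', ~ p s -> ~ p t -> ~ p s' -> ~ p t' ->
     lclass p a s = lclass p a' s' -> lclass p b t = lclass p b' t' ->
     lclass p (op a s b t).1 (op a s b t).2 = lclass p (op a' s' b' t').1 (op a' s' b' t').2) ->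
  lift2 op p (lclass p a s) (lclass p b t) = lclass p (op a s b t).1 (op a s b t).2.
Proof.
move=> hs ht hwd; apply/predeqP => xy; split=> [|h]; last by exists a, s, b, t.
by move=> [a' [s' [b' [t' [hs' ht' e1 e2 hl]]]]]; rewrite (hwd a s b t a' s' b' t').
Qed.

Lemma lift1_lc (op : R -> R -> R * R) a s : ~ p s ->
  (forall a s a' s', ~ p s -> ~ p s' -> lclass p a s = lclass p a' s' ->
     lclass p (op a s).1 (op a s).2 = lclass p (op a' s').1 (op a' s').2) ->
  lift1 op p (lclass p a s) = lclass p (op a s).1 (op a s).2.
Proof.
move=> hs hwd; apply/predeqP => xy; split=> [|h]; last by exists a, s.
by move=> [a' [s' [hs' e1 hl]]]; rewrite (hwd a s a' s').
Qed.

Lemma cadd_lc a s b t : ~ p s -> ~ p t ->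
  cadd p (lclass p a s) (lclass p b t) = lclass p (a * t + b * s) (s * t).
Proof.
move=> hs ht; apply: (lift2_lc (op := fun a s b t => (a * t + b * s, s * t))) => //=.
move=> a0 s0 b0 t0 a1 s1 b1 t1 hs0 ht0 hs1 ht1.
move=> /(lc_eqE hs1) [u1 pu1 h1] /(lc_eqE ht1) [u2 pu2 h2].
apply: lc_eqI; [exact: pM | exact: pM | exists (u1 * u2); first exact: pM].
have -> : u1 * u2 * ((a0 * t0 + b0 * s0) * (s1 * t1) - (a1 * t1 + b1 * s1) * (s0 * t0)) =
  (u2 * t0 * t1) * (u1 * (a0 * s1 - a1 * s0)) + (u1 * s0 * s1) * (u2 * (b0 * t1 - b1 * t0)).
  by ring.
by rewrite h1 h2 !mulr0 addr0.
Qed.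

Lemma cmul_lc a s b t : ~ p s -> ~ p t ->
  cmul p (lclass p a s) (lclass p b t) = lclass p (a * b) (s * t).
Proof.
move=> hs ht; apply: (lift2_lc (op := fun a s b t => (a * b, s * t))) => //=.
move=> a0 s0 b0 t0 a1 s1 b1 t1 hs0 ht0 hs1 ht1.
move=> /(lc_eqE hs1) [u1 pu1 h1] /(lc_eqE ht1) [u2 pu2 h2].
apply: lc_eqI; [exact: pM | exact: pM | exists (u1 * u2); first exact: pM].
have -> : u1 * u2 * (a0 * b0 * (s1 * t1) - a1 * b1 * (s0 * t0)) =
  (u2 * b0 * t1) * (u1 * (a0 * s1 - a1 * s0)) + (u1 * a1 * s0) * (u2 * (b0 * t1 - b1 * t0)).
  by ring.
by rewrite h1 h2 !mulr0 addr0.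
Qed.

Lemma copp_lc a s : ~ p s -> copp p (lclass p a s) = lclass p (- a) s.
Proof.
move=> hs; apply: (lift1_lc (op := fun a s => (- a, s))) => //=.
move=> a0 s0 a1 s1 hs0 hs1 /(lc_eqE hs1) [u pu h]; apply: lc_eqI => //; exists u => //.
have -> : u * (- a0 * s1 - - a1 * s0) = - (u * (a0 * s1 - a1 * s0)) by ring.
by rewrite h oppr0.
Qed.

Lemma cder_lc m (d : 'I_m -> R -> R) i a s : is_derivation (d i) -> ~ p s ->
  cder d i p (lclass p a s) = lclass p (d i a * s - a * d i s) (s * s).
Proof.
move=> hD hs; apply: (lift1_lc (op := fun a s => (d i a * s - a * d i s, s * s))) => //=.
move=> a0 s0 a1 s1 hs0 hs1 /(lc_eqE hs1) [u pu h].
apply: lc_eqI; [exact: pM | exact: pM | exists (u * u); first exact: pM].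
have h' := congr1 (d i) h; rewrite (der0 hD) (derM hD) (derB hD) !(derM hD) in h'.
set e := a0 * s1 - a1 * s0 in h h'.
set e' := d i a0 * s1 + a0 * d i s1 - (d i a1 * s0 + a1 * d i s0) in h'.
have he' : u * u * e' = 0.
  have -> : u * u * e' = u * (d i u * e + u * e') - d i u * (u * e) by ring.
  by rewrite h' h !mulr0 subrr.
have -> : u * u * ((d i a0 * s0 - a0 * d i s0) * (s1 * s1)
                  - (d i a1 * s1 - a1 * d i s1) * (s0 * s0)) =
  s0 * s1 * (u * u * e') - (s1 * d i s0 + s0 * d i s1) * u * (u * e) by rewrite /e /e'; ring.
by rewrite he' h !mulr0 subrr.
Qed.

End Localisation.

Lemma seq_uniform_bound (T : eqType) (l : seq T) (P : T -> nat -> Prop) :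
  (forall x n n', (n <= n')%N -> P x n -> P x n') ->
  (forall x, x \in l -> exists n, P x n) -> exists n, forall x, x \in l -> P x n.
Proof.
move=> mono; elim: l => [|y l IH] hl; first by exists 0%N.
have [n1 h1] := hl y (mem_head y l).
have [n2 h2] : exists n, forall x, x \in l -> P x n.
  by apply: IH => x lx; apply: hl; rewrite inE lx orbT.
exists (n1 + n2)%N => x; rewrite inE => /predU1P [->|lx].
- exact: mono (leq_addr n2 n1) h1.
- exact: mono (leq_addl n1 n2) (h2 x lx).
Qed.

Section StructureSheaf.
Variables (R : comNzRingType) (m : nat) (d : 'I_m -> R -> R).
Hypothesis hd : is_diff_ring d.
Local Notation pt := (Xsp d).
Local Notation sec := (rsec d).

Ltac nq :=
  repeat first [assumption | exact: pt1 | exact: nqM | exact: hd.1 | apply: nqM | apply: nqX].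

Definition sec_add (f g : sec) : sec := fun q => cadd (sval q) (f q) (g q).
Definition sec_mul (f g : sec) : sec := fun q => cmul (sval q) (f q) (g q).
Definition sec_opp (f : sec) : sec := fun q => copp (sval q) (f q).
Definition sec_der i (f : sec) : sec := fun q => cder d i (sval q) (f q).
Definition iota (a : R) : sec := canon_iota d a.

Definition rep (f : sec) (q : pt) a s := ~ sval q s /\ f q = lclass (sval q) a s.

Definition reg (f : sec) (p : pt) :=
  exists e a b, ~ sval p e /\ forall q : pt, ~ sval q e -> rep f q a b.

(** Since the basic open sets form a basis of the Kolchin topology, a section
    is regular iff it is locally a fraction on basic open sets. *)
Lemma in_OX_reg f : in_OX f <-> forall p, reg f p.
Proof.
split=> [hf p|h p _].
- have [_ [W [[E hE] Wp _ [a [b hab]]]]] := hf p I.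
  have [e Ee pe] : exists2 e, E e & ~ sval p e.
    apply: contrapT => hn; apply: (proj2 (hE p)) Wp => x Ex.
    by apply: contrapT => px; apply: hn; exists x.
  exists e, a, b; split=> // q qe; apply: hab.
  by apply: contrapT => qW; apply/qe/(proj1 (hE q) qW).
- have [e [a [b [pe hr]]]] := h p.
  split; first by have [pb ->] := hr p pe; exists a, b.
  exists (fun q => ~ sval q e); split=> //; last by exists a, b => q /hr [].
  exists [set e] => P; split=> [PeN x -> | hx]; first exact: contrapT.
  by apply; apply: hx.
Qed.

Lemma rep_at f p : in_OX f -> exists a s, rep f p a s.
Proof. by move=> /in_OX_reg /(_ p) [e [a [b [pe hr]]]]; exists a, b; apply: hr. Qed.

Lemma in_OX_iota a : in_OX (iota a).
Proof.
apply/in_OX_reg => p; exists 1, a, 1.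
by split=> [|q _]; [exact: pt1 | split; first exact: pt1].
Qed.

Lemma in_OX_add f g : in_OX f -> in_OX g -> in_OX (sec_add f g).
Proof.
move=> /in_OX_reg hf /in_OX_reg hg; apply/in_OX_reg => p.
have [e1 [a1 [b1 [pe1 h1]]]] := hf p; have [e2 [a2 [b2 [pe2 h2]]]] := hg p.
exists (e1 * e2), (a1 * b2 + a2 * b1), (b1 * b2); split; first by nq.
move=> q /nqME [qe1 qe2]; have [qb1 ef] := h1 q qe1; have [qb2 eg] := h2 q qe2.
by split; [nq | rewrite /sec_add ef eg cadd_lc; nq].
Qed.

Lemma in_OX_mul f g : in_OX f -> in_OX g -> in_OX (sec_mul f g).
Proof.
move=> /in_OX_reg hf /in_OX_reg hg; apply/in_OX_reg => p.
have [e1 [a1 [b1 [pe1 h1]]]] := hf p; have [e2 [a2 [b2 [pe2 h2]]]] := hg p.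
exists (e1 * e2), (a1 * a2), (b1 * b2); split; first by nq.
move=> q /nqME [qe1 qe2]; have [qb1 ef] := h1 q qe1; have [qb2 eg] := h2 q qe2.
by split; [nq | rewrite /sec_mul ef eg cmul_lc; nq].
Qed.

Lemma in_OX_opp f : in_OX f -> in_OX (sec_opp f).
Proof.
move=> /in_OX_reg hf; apply/in_OX_reg => p.
have [e [a [b [pe h]]]] := hf p; exists e, (- a), b; split=> // q qe.
by have [qb ef] := h q qe; split; [nq | rewrite /sec_opp ef copp_lc; nq].
Qed.

Lemma in_OX_der i f : in_OX f -> in_OX (sec_der i f).
Proof.
move=> /in_OX_reg hf; apply/in_OX_reg => p.
have [e [a [b [pe h]]]] := hf p; exists e, (d i a * b - a * d i b), (b * b); split=> // q qe.
by have [qb ef] := h q qe; split; [nq | rewrite /sec_der ef cder_lc; nq].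
Qed.

Lemma iota_add x y : sec_add (iota x) (iota y) = iota (x + y).
Proof. apply: funext => q; rewrite /sec_add cadd_lc; nq; apply: lc_eqR; nq; ring. Qed.

Lemma iota_mul x y : sec_mul (iota x) (iota y) = iota (x * y).
Proof. apply: funext => q; rewrite /sec_mul cmul_lc; nq; apply: lc_eqR; nq; ring. Qed.

Lemma iota_der i x : sec_der i (iota x) = iota (d i x).
Proof.
apply: funext => q; rewrite /sec_der cder_lc; nq.
by apply: lc_eqR; nq; rewrite (der1 (hd.1 i)); ring.
Qed.

Local Notation OX := (OX_dring d).

Section PointsOfOX.
Variable Q : dspec OX.

Lemma Qmem f : sval Q f -> in_OX f.
Proof. by case: Q => P /= [h _]; apply: h. Qed.
Lemma Q0 : sval Q (iota 0).
Proof. by case: Q => P /= [_ [h _]]. Qed.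
Lemma Qadd f g : sval Q f -> sval Q g -> sval Q (sec_add f g).
Proof. by case: Q => P /= [_ [_ [h _]]]; apply: h. Qed.
Lemma Qopp f : sval Q f -> sval Q (sec_opp f).
Proof. by case: Q => P /= [_ [_ [_ [h _]]]]; apply: h. Qed.
Lemma Qmul r f : in_OX r -> sval Q f -> sval Q (sec_mul r f).
Proof. by case: Q => P /= [_ [_ [_ [_ [h _]]]]]; apply: h. Qed.
Lemma Q1 : ~ sval Q (iota 1).
Proof. by case: Q => P /= [_ [_ [_ [_ [_ [h _]]]]]]. Qed.
Lemma Qpr f g : in_OX f -> in_OX g -> sval Q (sec_mul f g) -> sval Q f \/ sval Q g.
Proof. by case: Q => P /= [_ [_ [_ [_ [_ [_ [h _]]]]]]]; apply: h. Qed.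
Lemma Qder i f : sval Q f -> sval Q (sec_der i f).
Proof. by case: Q => P /= [_ [_ [_ [_ [_ [_ [_ h]]]]]]]; apply: h. Qed.

Lemma istar_di : is_di d (fun a => sval Q (iota a)).
Proof.
split=> [|x y hx hy|r x hx|i x hx]; first exact: Q0.
- by rewrite -iota_add; apply: Qadd.
- by rewrite -iota_mul; apply: Qmul => //; apply: in_OX_iota.
- by rewrite -iota_der; apply: Qder.
Qed.

Lemma istar_pr x y : sval Q (iota (x * y)) -> sval Q (iota x) \/ sval Q (iota y).
Proof. by rewrite -iota_mul; apply: Qpr; apply: in_OX_iota. Qed.

Definition istar : pt := mkpt istar_di Q1 istar_pr.

End PointsOfOX.

Definition in_max (p : pt) (c : R * R -> Prop) :=
  exists a s, [/\ ~ sval p s, sval p a & c = lclass (sval p) a s].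

Lemma in_max_lc (p : pt) a s : ~ sval p s -> in_max p (lclass (sval p) a s) <-> sval p a.
Proof.
move=> ps; split=> [[a' [s' [ps' pa' /(lc_eqE (pt1 p) ps') [u pu hu]]]]|pa]; last by exists a, s.
have : sval p (u * a * s').
  have -> : u * a * s' = u * (a * s' - a' * s) + u * s * a' by ring.
  by rewrite hu; apply: (diD (pt_di p)); [apply: (di0 (pt_di p)) | apply: (diM (pt_di p))].
by case/ptpr => [/ptpr [] //|].
Qed.

Definition Qof (p : pt) (f : sec) := in_OX f /\ in_max p (f p).

Section InverseMap.
Variable p : pt.

Lemma Qof_iota a : Qof p (iota a) <-> sval p a.
Proof.
split=> [[_ /in_max_lc h]|pa]; first by apply: h; nq.
by split; [apply: in_OX_iota | apply/in_max_lc; nq].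
Qed.

Lemma Qof_rep f a s : in_OX f -> rep f p a s -> Qof p f <-> sval p a.
Proof. by move=> hf [ps ef]; rewrite /Qof ef in_max_lc //; split=> [[]|]. Qed.

Lemma Qof_dprime : is_dprime (D := OX) (Qof p).
Proof.
have P := pt_di p.
split; first by move=> f [].
split; first exact/Qof_iota/(di0 P).
split.
  move=> f g [hf [a [s [ps pa ef]]]] [hg [b [t [pt' pb eg]]]]; split; first exact: in_OX_add.
  by rewrite /= ef eg cadd_lc; nq; apply/in_max_lc; nq; apply: (diD P); apply: (diMr P).
split.
  move=> f [hf [a [s [ps pa ef]]]]; split; first exact: in_OX_opp.
  by rewrite /= ef copp_lc; nq; apply/in_max_lc; nq; apply: (diN P).
split.
  move=> r f hr [hf [a [s [ps pa ef]]]]; split; first exact: in_OX_mul.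
  have [c [w [pw er]]] := rep_at p hr.
  by rewrite /= ef er cmul_lc; nq; apply/in_max_lc; nq; apply: (diM P).
split; first by move/Qof_iota; apply: pt1.
split.
  move=> f g hf hg [_].
  have [a [s [ps ef]]] := rep_at p hf; have [b [t [pt' eg]]] := rep_at p hg.
  rewrite /= ef eg cmul_lc; nq; move/in_max_lc => pab.
  have /ptpr [pa|pb] : sval p (a * b) by apply: pab; nq.
  - by left; apply/(Qof_rep hf (conj ps ef)).
  - by right; apply/(Qof_rep hg (conj pt' eg)).
move=> i f [hf [a [s [ps pa ef]]]]; split; first exact: in_OX_der.
rewrite /= ef cder_lc; nq; apply/in_max_lc; nq.
by apply: (diB P); [apply: (diMr P); apply: (diDer P) | apply: (diMr P)].
Qed.

Definition qstar : dspec OX := exist _ (Qof p) Qof_dprime.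

End InverseMap.

Definition sec_pow (h : sec) (n : nat) : sec := iter n (sec_mul h) (iota 1).

Lemma in_OX_pow h n : in_OX h -> in_OX (sec_pow h n).
Proof. by move=> hh; elim: n => [|n IH] /=; [apply: in_OX_iota | apply: in_OX_mul]. Qed.

Lemma sec_pow_rep h q c w n : rep h q c w -> sec_pow h n q = lclass (sval q) (c ^+ n) (w ^+ n).
Proof.
move=> [qw e]; elim: n => [|n IH] /=; first by rewrite !expr0.
by rewrite /sec_mul IH e cmul_lc; nq; rewrite -!exprS.
Qed.

Lemma Qpow (Q : dspec OX) h n : in_OX h -> sval Q (sec_pow h n) -> sval Q h.
Proof.
move=> hh; elim: n => [/Q1 //|n IH] /= hn.
by case: (Qpr hh (in_OX_pow n hh) hn) => //; apply: IH.
Qed.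

(** [nil_at h q n]: the numerator [c] of a fraction [c/w] representing [h] at
    [q] satisfies [u c^n = 0] for some [u ∉ q], so that [h^n] vanishes at [q]. *)
Definition nil_at (h : sec) (q : pt) (n : nat) :=
  exists c w u, [/\ rep h q c w, ~ sval q u & u * c ^+ n = 0].

Lemma nil_at_mono h q n n' : (n <= n')%N -> nil_at h q n -> nil_at h q n'.
Proof.
move=> le [c [w [u [hr qu hu]]]]; exists c, w, u; split=> //.
by rewrite -(subnK le) exprD mulrCA hu mulr0.
Qed.

Lemma nil_at_pow h q n : nil_at h q n -> sec_pow h n q = iota 0 q.
Proof.
move=> [c [w [u [hr qu hu]]]]; rewrite (sec_pow_rep n hr); have [qw _] := hr.
by apply: lc_eqI; nq; exists u => //; rewrite mulr1 mul0r subr0.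
Qed.

Section KeyLemma.
Hypothesis hQ : ritt R.

Ltac lcsimp := repeat (first [rewrite cmul_lc | rewrite cadd_lc | rewrite copp_lc]; nq).

(** If [g] vanishes on [D(e)], then [iota(e) g] is nilpotent: near every point
    [g = a/b] on some [D(x)], and [x e a] is nilpotent by
    [locally_zero_nilpotent]; finitely many [D(x)] cover [Spec^Δ R]. *)
Lemma vanishing_nilpotent g e : in_OX g ->
  (forall q : pt, ~ sval q e -> g q = iota 0 q) ->
  exists n, sec_pow (sec_mul (iota e) g) n = iota 0.
Proof.
move=> hg hz; set h := sec_mul (iota e) g.
pose E x := exists a b, forall q : pt, ~ sval q x -> rep g q a b.
have local x : E x -> exists n, forall q : pt, ~ sval q x -> nil_at h q n.
  move=> [a [b hab]].
  have [n hn] : exists n, (x * e * a) ^+ n = 0.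
    apply: (locally_zero_nilpotent hd hQ) => q /nqME [qx qe].
    have [qb ega] := hab q qx; rewrite (hz q qe) in ega.
    have [u qu hu] := lc_eqE (pt1 q) qb ega.
    by exists u => //; move/eqP: hu; rewrite mul0r mulr1 sub0r mulrN oppr_eq0 => /eqP.
  exists n => q qx; exists (e * a), (1 * b), (x ^+ n).
  have [qb ega] := hab q qx; split; [split; first by nq | by nq | by rewrite -exprMn mulrA].
  by rewrite /h /sec_mul ega; lcsimp.
have cover (q : pt) : exists2 x, E x & ~ sval q x.
  by have /in_OX_reg/(_ q) [x [a [b [qx hx]]]] := hg; exists x => //; exists a, b.
have [l lE lcov] := quasi_compact hd hQ cover.
have [n hn] := @seq_uniform_bound _ l (fun x n => forall q : pt, ~ sval q x -> nil_at h q n)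
  (fun x n n' le hx q qx => nil_at_mono le (hx q qx)) (fun x lx => local x (lE x lx)).
exists n; apply: funext => q; have [x lx qx] := lcov q.
exact: nil_at_pow (hn x lx q qx).
Qed.

Lemma vanishing_in_point (Q : dspec OX) g e : in_OX g ->
  (forall q : pt, ~ sval q e -> g q = iota 0 q) -> sval Q (sec_mul (iota e) g).
Proof.
move=> hg hz; have [n hn] := vanishing_nilpotent hg hz.
apply: (Qpow (n := n)); first by apply: in_OX_mul => //; apply: in_OX_iota.
by rewrite hn; apply: Q0.
Qed.

(** Near [p = istar Q]
    we have [f = a/b] on [D(e)], so [g = iota(b) f - iota(a)] vanishes on [D(e)]
    and [iota(e) g ∈ Q]; hence [f ∈ Q <-> iota(e b) f ∈ Q <-> iota(e a) ∈ Q <-> a ∈ p]. *)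
Lemma Qof_istar (Q : dspec OX) f : sval Q f <-> Qof (istar Q) f.
Proof.
have [hf|hf] := pselect (in_OX f); last by split=> [/Qmem|[]].
set p := istar Q; have /in_OX_reg/(_ p) [e [a [b [pe hr]]]] := hf.
have [pb efp] := hr p pe; rewrite (Qof_rep hf (conj pb efp)).
pose g := sec_add (sec_mul (iota b) f) (sec_opp (iota a)).
have hg : in_OX g.
  by apply: in_OX_add; [apply: in_OX_mul => //; apply: in_OX_iota | apply/in_OX_opp/in_OX_iota].
have Qeg : sval Q (sec_mul (iota e) g).
  apply: vanishing_in_point => // q qe; have [qb efq] := hr q qe.
  by rewrite /g /sec_add /sec_mul /sec_opp efq; lcsimp; apply: lc_eqR; nq; ring.
have I1 : sec_add (sec_mul (iota (e * b)) f) (sec_opp (sec_mul (iota e) g)) = iota (e * a).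
  apply: funext => q; have [a' [s' [qs' efq]]] := rep_at q hf.
  by rewrite /g /sec_add /sec_mul /sec_opp efq; lcsimp; apply: lc_eqR; nq; ring.
have I2 : sec_add (sec_mul (iota e) g) (iota (e * a)) = sec_mul (iota (e * b)) f.
  apply: funext => q; have [a' [s' [qs' efq]]] := rep_at q hf.
  by rewrite /g /sec_add /sec_mul /sec_opp efq; lcsimp; apply: lc_eqR; nq; ring.
split=> [Qf | pa].
- have : sval p (e * a).
    rewrite /= -I1; apply: Qadd; last exact: Qopp.
    by apply: Qmul => //; apply: in_OX_iota.
  by case/ptpr => // /pe.
- have : sval Q (sec_mul (iota (e * b)) f).
    by rewrite -I2; apply: Qadd => //; apply: (diM (pt_di p) e pa).
  by case/(Qpr (in_OX_iota _) hf) => // peb; case: (nqM pe pb).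
Qed.

Lemma qstar_istar Q : qstar (istar Q) = Q.
Proof. by apply: dspec_eq; apply/predeqP => f; symmetry; apply: Qof_istar. Qed.

End KeyLemma.

Lemma istar_qstar p : istar (qstar p) = p.
Proof. by apply: dspec_eq; apply/predeqP => a; apply: Qof_iota. Qed.

(** [istar] is continuous: the preimage of [V(E)] is [V(iota E)]. *)
Lemma istar_continuous : kcontinuous istar.
Proof.
move=> U [E hE]; exists (fun f => exists2 x, E x & f = iota x) => Q.
apply: iff_trans (hE (istar Q)) _.
by split=> [h f [x Ex ->] | h x Ex]; [apply: h | apply: h; exists x].
Qed.

(** The preimage of a closed set [V(F)] under [qstar] is closed: if [p] contains
    every [x] lying in all points [p'] with [F ⊆ Qof p'], then [F ⊆ Qof p]. *)
Lemma qstar_preimage_closed (F : set sec) :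
  kclosed (fun p : pt => forall f, F f -> sval (qstar p) f).
Proof.
apply: kclosed_hull => p hp f Ff.
have [hf|hf] := pselect (in_OX f); last first.
  by case: (pt1 p); apply: hp => p' /(_ f Ff) [].
have /in_OX_reg/(_ p) [e [a [b [pe hr]]]] := hf.
have [pb efp] := hr p pe; apply/(Qof_rep hf (conj pb efp)).
have /ptpr [/pe []|//] : sval p (e * a).
apply: hp => p' /(_ f Ff) Qf.
have [p'e|p'e] := pselect (sval p' e); first exact: (diMr (pt_di p') a p'e).
have [p'b efp'] := hr p' p'e.
by apply: (diM (pt_di p') e); apply/(Qof_rep hf (conj p'b efp')).
Qed.

Lemma qstar_continuous : kcontinuous qstar.
Proof.
move=> U [F hF]; have [E hE] := qstar_preimage_closed F.
by exists E => p; apply: iff_trans (hF (qstar p)) (hE p).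
Qed.

End StructureSheaf.

Theorem corollary3p3 (R : comNzRingType) (m : nat) (d : 'I_m -> R -> R)
  (hd : is_diff_ring d) (hQ : ritt R) :
  exists iota_star : dspec (OX_dring d) -> dspec (ring_dring d),
    (forall Q : dspec (OX_dring d), sval (iota_star Q) = fun a => sval Q (canon_iota d a))
    /\ khomeomorphism iota_star.
Proof.
exists (istar hd); split=> //.
exists (qstar hd); split.
- exact: qstar_istar.
- exact: istar_qstar.
- exact: istar_continuous.
- exact: qstar_continuous.
Qed.
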